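(* Let $\mathcal{M}=(W,E,V)$ be a coalition model in which $E_w$ satisfies $\alpha$-duality for every $w\in W$. For $w\in W$, $C\subseteq N$, $\varphi\in\mathcal{L}_{CL}$, let $\mathrm{cat}_w(C,\varphi)\in\{\mathrm{FC},\mathrm{PD},\mathrm{AD},\mathrm{FI}\}$ be the unique category $X$ such that $\mathcal{M},w\models X_C(\varphi)$. Let $\sigma_{\mathrm{neg}}$ be the permutation of $\{\mathrm{FC},\mathrm{PD},\mathrm{AD},\mathrm{FI}\}$ fixing $\mathrm{FC},\mathrm{FI}$ and swapping $\mathrm{PD},\mathrm{AD}$; let $\sigma_{\mathrm{comp}}$ fix $\mathrm{PD},\mathrm{AD}$ and swap $\mathrm{FC},\mathrm{FI}$; let $\sigma_{\mathrm{both}}=\sigma_{\mathrm{neg}}\circ\sigma_{\mathrm{comp}}$. Then for all $w,C,\varphi$: $\mathrm{cat}_w(C,\neg\varphi)=\sigma_{\mathrm{neg}}(\mathrm{cat}_w(C,\varphi))$, $\mathrm{cat}_w(N\setminus C,\varphi)=\sigma_{\mathrm{comp}}(\mathrm{cat}_w(C,\varphi))$, and $\mathrm{cat}_w(N\setminus C,\neg\varphi)=\sigma_{\mathrm{both}}(\mathrm{cat}_w(C,\varphi))$. Thus the transformations $(C,\varphi)\mapsto(C,\neg\varphi)$, $(C,\varphi)\mapsto(N\setminus C,\varphi)$, their composite, and the identity induce the permutations $\sigma_{\mathrm{neg}},\sigma_{\mathrm{comp}},\sigma_{\mathrm{both}},\mathrm{id}$ of the four categories, and these four permutations form a group under composition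 isomorphic to the Klein four-group $V_4\cong\mathbb{Z}_2\times\mathbb{Z}_2$.
   Context: Let $N=\{1,\dots,n\}$ be a finite set of agents and $\mathrm{Prop}$ a countable set of atoms. The language $\mathcal{L}_{CL}$ is $\varphi ::= p \mid \neg\varphi \mid (\varphi\wedge\psi)\mid [C]\varphi$ ($p\in\mathrm{Prop}$, $C\subseteq N$). A coalition model is $\mathcal{M}=(W,E,V)$, $W$ nonempty, $E_w(C)\subseteq\mathcal{P}(W)$ for $w\in W$, $C\subseteq N$, $V:\mathrm{Prop}\to\mathcal{P}(W)$; satisfaction is classical for Boolean parts and $\mathcal{M},w\models[C]\varphi$ iff $[\![\varphi]\!]_{\mathcal{M}}=\{u\mid\mathcal{M},u\models\varphi\}\in E_w(C)$. $E_w$ satisfies $\alpha$-duality if for all $C\subseteq N$, $X\subseteq W$: $X\in E_w(C)$ iff $W\setminus X\notin E_w(N\setminus C)$. Categories: $\mathrm{FC}_C(\varphi)=[C]\varphi\wedge[C]\neg\varphi$, $\mathrm{PD}_C(\varphi)=[C]\varphi\wedge\neg[C]\neg\varphi$, $\mathrm{AD}_C(\varphi)=\neg[C]\varphi\wedge[C]\neg\varphi$, $\mathrm{FI}_C(\varphi)=\neg[C]\varphi\wedge\neg[C]\neg\varphi$; exactly one of these holds at each state. *)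

From HB Require Import structures.
From mathcomp Require Import all_boot.
From mathcomp Require Import boolp classical_sets.
Set Implicit Arguments. Unset Strict Implicit. Unset Printing Implicit Defensive.

Local Open Scope classical_set_scope.

(* Agents N = {0,...,n-1} = 'I_n; coalitions are {set 'I_n}; atoms are nat. *)
Inductive form (n : nat) : Type :=
  | Atom : nat -> form n
  | Neg : form n -> form n
  | And : form n -> form n -> form n
  | Box : {set 'I_n} -> form n -> form n.

Arguments Atom {n}.

Fixpoint sat (n : nat) (W : Type) (E : W -> {set 'I_n} -> set (set W))
    (V : nat -> set W) (w : W) (phi : form n) : Prop :=
  match phi with
  | Atom p => V p w
  | Neg psi => ~ sat E V w psi
  | And a b => sat E V w a /\ sat E V w b
  | Box C psi => E w C [set u | sat E V u psi]
  end.

Definition alpha_duality (n : nat) (W : Type)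
    (Ew : {set 'I_n} -> set (set W)) : Prop :=
  forall (C : {set 'I_n}) (X : set W), Ew C X <-> ~ Ew (~: C) (~` X).

Inductive category := FC | PD | AD | FI.

Definition catform (n : nat) (X : category) (C : {set 'I_n}) (phi : form n)
  : form n :=
  match X with
  | FC => And (Box C phi) (Box C (Neg phi))
  | PD => And (Box C phi) (Neg (Box C (Neg phi)))
  | AD => And (Neg (Box C phi)) (Box C (Neg phi))
  | FI => And (Neg (Box C phi)) (Neg (Box C (Neg phi)))
  end.

Definition catw (n : nat) (W : Type) (E : W -> {set 'I_n} -> set (set W))
    (V : nat -> set W) (w : W) (C : {set 'I_n}) (phi : form n) : category :=
  if pselect (sat E V w (catform FC C phi)) then FC
  else if pselect (sat E V w (catform PD C phi)) then PD
  else if pselect (sat E V w (catform AD C phi)) then AD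
  else FI.

Definition sigma_neg (X : category) : category :=
  match X with FC => FC | PD => AD | AD => PD | FI => FI end.
Definition sigma_comp (X : category) : category :=
  match X with FC => FI | PD => PD | AD => AD | FI => FC end.
Definition sigma_both : category -> category := sigma_neg \o sigma_comp.

Definition klein (ab : bool * bool) : category -> category :=
  (if ab.1 then sigma_neg else id) \o (if ab.2 then sigma_comp else id).

(* The category of (C, phi) at w is determined by the two truth values
   a = [C]phi and b = [C]~phi.  Negating phi swaps a and b, which is
   sigma_neg.  By alpha-duality [N\C]phi = ~[C]~phi and [N\C]~phi = ~[C]phi,
   so complementing C maps (a, b) to (~b, ~a), which is sigma_comp.  The four
   permutations id, sigma_neg, sigma_comp, sigma_both commute, square to the
   identity and are pairwise distinct, hence form a copy of Z2 x Z2. *)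
From mathcomp Require Import all_boot.
From mathcomp Require Import boolp classical_sets.
Set Implicit Arguments. Unset Strict Implicit. Unset Printing Implicit Defensive.

Local Open Scope classical_set_scope.

Definition cat_of (a b : bool) : category :=
  if a then (if b then FC else PD) else (if b then AD else FI).

Lemma sigma_neg_cat_of (a b : bool) : sigma_neg (cat_of a b) = cat_of b a.
Proof. by case: a; case: b. Qed.

Lemma sigma_comp_cat_of (a b : bool) :
  sigma_comp (cat_of a b) = cat_of (~~ b) (~~ a).
Proof. by case: a; case: b. Qed.

Lemma alpha_duality_setC (n : nat) (W : Type) (Ew : {set 'I_n} -> set (set W))
    (C : {set 'I_n}) (X : set W) :
  alpha_duality Ew -> Ew (~: C) X = ~ Ew C (~` X).
Proof.
by move=> dualE; apply/propext; have := dualE (~: C) X; rewrite finset.setCK.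
Qed.

Section Categories.

Variables (n : nat) (W : Type) (E : W -> {set 'I_n} -> set (set W)).
Variable V : nat -> set W.

Definition extension (phi : form n) : set W := [set u | sat E V u phi].

Lemma extension_neg (phi : form n) : extension (Neg phi) = ~` extension phi.
Proof. by []. Qed.

Lemma extension_negK (phi : form n) : extension (Neg (Neg phi)) = extension phi.
Proof. by rewrite !extension_neg setCK. Qed.

Lemma catwE (w : W) (C : {set 'I_n}) (phi : form n) :
  catw E V w C phi =
  cat_of `[< E w C (extension phi) >] `[< E w C (extension (Neg phi)) >].
Proof.
rewrite /catw /cat_of /=.
case: asboolP => a; case: asboolP => b; do ![case: pselect => /= ?]; tauto.
Qed.

Lemma catw_neg (w : W) (C : {set 'I_n}) (phi : form n) :
  catw E V w C (Neg phi) = sigma_neg (catw E V w C phi).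
Proof. by rewrite !catwE extension_negK sigma_neg_cat_of. Qed.

Lemma catw_setC (w : W) (C : {set 'I_n}) (phi : form n) :
  alpha_duality (E w) -> catw E V w (~: C) phi = sigma_comp (catw E V w C phi).
Proof.
move=> dualE; rewrite !catwE sigma_comp_cat_of extension_neg.
by rewrite !alpha_duality_setC // setCK !asbool_neg.
Qed.

End Categories.

Lemma klein_inj : injective klein.
Proof. by move=> [[] []] [[] []] /(congr1 (fun f => (f FC, f PD))). Qed.

Lemma kleinD (a b : bool * bool) :
  klein (addb a.1 b.1, addb a.2 b.2) = klein a \o klein b.
Proof. by case: a => [[] []]; case: b => [[] []]; apply/funext => -[]. Qed.

Theorem mainTheorem6 (n : nat) (W : Type) (E : W -> {set 'I_n} -> set (set W))
    (V : nat -> set W) :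
  inhabited W ->
  (forall w : W, alpha_duality (E w)) ->
  (forall (w : W) (C : {set 'I_n}) (phi : form n),
      catw E V w C (Neg phi) = sigma_neg (catw E V w C phi) /\
      catw E V w (~: C) phi = sigma_comp (catw E V w C phi) /\
      catw E V w (~: C) (Neg phi) = sigma_both (catw E V w C phi)) /\
  (* the four permutations form a group isomorphic to Z2 x Z2 via klein *)
  (injective klein /\
      (forall a b : bool * bool,
         klein (addb a.1 b.1, addb a.2 b.2) = klein a \o klein b) /\
      klein (false, false) = id /\
      klein (true, false) = sigma_neg /\
      klein (false, true) = sigma_comp /\
      klein (true, true) = sigma_both).
Proof.
move=> _ dualE; split.
  move=> w C phi; split; first exact: catw_neg.
  split; first exact: catw_setC (dualE w).
  by rewrite catw_neg (catw_setC _ _ _ (dualE w)).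
split; first exact: klein_inj.
split; first exact: kleinD.
by do !split; apply/funext => -[].
Qed.
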